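(* Let $\mathcal P$ be as in the context. Consider any $(\mathbf x,\mathbf y)\in\mathcal P$ and $t\in[2,T]_{\mathbb Z}$. (i) If $y_t=0$, then $y_{t-j}-y_{t-j-1}\le 0$ for all $j\in[0,\min\{t-2,L-1\}]_{\mathbb Z}$. (ii) If $y_t=1$, then there exists at most one $j\in[0,\min\{t-2,L\}]_{\mathbb Z}$ such that $y_{t-j}-y_{t-j-1}=1$.
   Context: For integers $a,b$, $[a,b]_{\mathbb Z}=\{a,a+1,\dots,b\}$ if $a\le b$ and $\emptyset$ otherwise. Fix a positive integer $T$, positive integers $L$ (minimum up time) and $\ell$ (minimum down time), and reals $\overline C,\underline C,V,\overline V$ with $\overline C>\underline C>0$, $V>0$, $\overline V+V\le\overline C$ and $\underline C<\overline V<\underline C+V$. $\mathcal P$ is the set of $(\mathbf x,\mathbf y)=((x_1,\dots,x_T),(y_1,\dots,y_T))\in\mathbb R_+^T\times\{0,1\}^T$ satisfying: (i) $-y_{t-1}+y_t-y_k\le 0$ for all $t\in[2,T]_{\mathbb Z}$, $k\in[t,\min\{T,t+L-1\}]_{\mathbb Z}$; (ii) $y_{t-1}-y_t+y_k\le 1$ for all $t\in[2,T]_{\mathbb Z}$, $k\in[t,\min\{T,t+\ell-1\}]_{\mathbb Z}$; (iii) $-x_t+\underline C y_t\le 0$ and $x_t-\overline C y_t\le 0$ for all $t\in[1,T]_{\mathbb Z}$; (iv) $x_t-x_{t-1}\le Vy_{t-1}+\overline V(1-y_{t-1})$ for all $t\in[2,T]_{\mathbb Z}$; (v) $x_{t-1}-x_t\le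 Vy_t+\overline V(1-y_t)$ for all $t\in[2,T]_{\mathbb Z}$. *)

From Stdlib Require Import Reals Lra Lia.
Open Scope R_scope.

(* Membership of (x, y) in the polytope-with-binaries P.  x, y : nat -> R,
   only the entries at indices 1..T are meaningful. *)
Definition inP (T L l : nat) (Cbar Cund V Vbar : R)
  (x y : nat -> R) : Prop :=
  (forall t, (1 <= t <= T)%nat -> 0 <= x t /\ (y t = 0 \/ y t = 1)) /\
  (forall t k, (2 <= t <= T)%nat -> (t <= k <= Nat.min T (t + L - 1))%nat ->
      - y (t - 1)%nat + y t - y k <= 0) /\
  (forall t k, (2 <= t <= T)%nat -> (t <= k <= Nat.min T (t + l - 1))%nat ->
      y (t - 1)%nat - y t + y k <= 1) /\
  (forall t, (1 <= t <= T)%nat ->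
      - x t + Cund * y t <= 0 /\ x t - Cbar * y t <= 0) /\
  (forall t, (2 <= t <= T)%nat ->
      x t - x (t - 1)%nat <= V * y (t - 1)%nat + Vbar * (1 - y (t - 1)%nat)) /\
  (forall t, (2 <= t <= T)%nat ->
      x (t - 1)%nat - x t <= V * y t + Vbar * (1 - y t)).

From Stdlib Require Import Reals Lra Lia.
Open Scope R_scope.

(* Only the binarity of [y] and the minimum up-time constraint (i) are needed.
   A start-up at [s] (i.e. [y s - y (s - 1) = 1]) forces [y k = 1] for the next
   [L] periods [k = s, ..., s + L - 1].  Hence no start-up occurs in the [L]
   periods before an off period, and two start-ups are more than [L] apart. *)

Section MinimumUpTime.

Variables (T L : nat) (y : nat -> R).

Hypothesis y_binary : forall t, (1 <= t <= T)%nat -> y t = 0 \/ y t = 1.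

Hypothesis min_up : forall t k, (2 <= t <= T)%nat ->
  (t <= k <= Nat.min T (t + L - 1))%nat -> - y (t - 1)%nat + y t - y k <= 0.

Lemma startup_stays_on (s k : nat) :
  (2 <= s <= T)%nat -> (s <= k <= Nat.min T (s + L - 1))%nat ->
  y s - y (s - 1)%nat = 1 -> y k = 1.
Proof.
  intros Hs Hk Hup.
  specialize (min_up s k Hs Hk).
  destruct (y_binary k) as [Hy | Hy]; [lia | lra | exact Hy].
Qed.

Lemma no_startup_before_off (s t : nat) :
  (2 <= s <= t)%nat -> (t <= T)%nat -> (t <= s + L - 1)%nat ->
  y t = 0 -> y s - y (s - 1)%nat <= 0.
Proof.
  intros Hs Ht HtL Hoff.
  destruct (y_binary s) as [Hys | Hys]; [lia | |];
    destruct (y_binary (s - 1)%nat) as [Hyp | Hyp]; try lia; try lra.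
  assert (Hon : y t = 1) by (apply (startup_stays_on s t); lia || lra).
  lra.
Qed.

Lemma startups_far_apart (s1 s2 : nat) :
  (2 <= s1 < s2)%nat -> (s2 <= T)%nat ->
  y s1 - y (s1 - 1)%nat = 1 -> y s2 - y (s2 - 1)%nat = 1 -> (L < s2 - s1)%nat.
Proof.
  intros Hs1 Hs2 Hup1 Hup2.
  destruct (Nat.lt_ge_cases L (s2 - s1)) as [Hfar | Hnear]; [exact Hfar | exfalso].
  assert (Hon : y (s2 - 1)%nat = 1) by (apply (startup_stays_on s1); lia || lra).
  destruct (y_binary s2); lia || lra.
Qed.

Lemma startup_unique_within (s1 s2 : nat) :
  (2 <= s1 <= T)%nat -> (2 <= s2 <= T)%nat -> (s1 <= s2 + L)%nat -> (s2 <= s1 + L)%nat ->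
  y s1 - y (s1 - 1)%nat = 1 -> y s2 - y (s2 - 1)%nat = 1 -> s1 = s2.
Proof.
  intros Hs1 Hs2 Hle1 Hle2 Hup1 Hup2.
  destruct (Nat.lt_total s1 s2) as [Hlt | [Heq | Hgt]]; [| exact Heq |].
  - assert (L < s2 - s1)%nat by (apply startups_far_apart; lia || assumption).
    lia.
  - assert (L < s1 - s2)%nat by (apply startups_far_apart; lia || assumption).
    lia.
Qed.

End MinimumUpTime.

Theorem lemma1 (T L l : nat) (Cbar Cund V Vbar : R)
  (hT : (1 <= T)%nat) (hL : (1 <= L)%nat) (hl : (1 <= l)%nat)
  (hC1 : Cbar > Cund) (hC2 : Cund > 0) (hV : V > 0)
  (hV1 : Vbar + V <= Cbar) (hV2 : Cund < Vbar) (hV3 : Vbar < Cund + V)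
  (x y : nat -> R) (hP : inP T L l Cbar Cund V Vbar x y)
  (t : nat) (ht : (2 <= t <= T)%nat) :
  (y t = 0 ->
     forall j : nat, (j <= Nat.min (t - 2) (L - 1))%nat ->
       y (t - j)%nat - y (t - j - 1)%nat <= 0) /\
  (y t = 1 ->
     forall j1 j2 : nat,
       (j1 <= Nat.min (t - 2) L)%nat -> (j2 <= Nat.min (t - 2) L)%nat ->
       y (t - j1)%nat - y (t - j1 - 1)%nat = 1 ->
       y (t - j2)%nat - y (t - j2 - 1)%nat = 1 ->
       j1 = j2).
Proof.
  destruct hP as [Hbounds [Hmin_up _]].
  assert (Hbin : forall s, (1 <= s <= T)%nat -> y s = 0 \/ y s = 1)
    by (intros s Hs; apply Hbounds, Hs).
  split.
  - intros Hoff j Hj.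
    apply (no_startup_before_off T L y Hbin Hmin_up (t - j) t); lia || exact Hoff.
  - intros _ j1 j2 Hj1 Hj2 Hup1 Hup2.
    enough (Hs : (t - j1 = t - j2)%nat) by lia.
    apply (startup_unique_within T L y Hbin Hmin_up); lia || assumption.
Qed.
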